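(* $2^6\rightarrow 167\rightrightarrows 19$: there is an injective isotone map $\varphi:\mathbf 2^6\to F_4^-$ such that $\{\varphi(x)[p_1:=e]: x\in\mathbf 2^6,\ e\in\{0,1\}\}\supseteq F_3^-$. In particular there is an injective isotone map from $\mathbf 2^6$ into $F_4$.
   Context: $F_k$ is the set of monotone Boolean functions of $k$ variables $p_1,\dots,p_k$ (including constants $0,1$), ordered pointwise; $F_k^-=F_k\setminus\{0\}$. For $g\in F_k$ and $e\in\{0,1\}$, $g[p_1:=e]$ is the function of $p_2,\dots,p_k$ obtained by substituting $e$ for $p_1$. $\mathbf 2^i$ is $\{0,1\}^i$ with the coordinatewise order; isotone means order-preserving. Notation: $2^i\rightarrow|F_j^-|\rightrightarrows|F_{j-1}^-|$ means there is an injective isotone $\varphi:\mathbf 2^i\to F_j^-$ such that every element of $F_{j-1}^-$ equals $\varphi(x)[p_1:=e]$ for some $x$, $e$. Here $|F_3^-|=19$, $|F_4^-|=167$. *)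

From mathcomp Require Import all_boot.
Set Implicit Arguments. Unset Strict Implicit. Unset Printing Implicit Defensive.

(* An assignment to the variables p_1..p_k : index i : 'I_k stands for p_(i+1). *)
Definition assign (k : nat) := {ffun 'I_k -> bool}.
Definition BF (k : nat) := {ffun assign k -> bool}.

Definition vle (k : nat) (x y : assign k) : bool := [forall i, x i ==> y i].

Definition fle (k : nat) (f g : BF k) : bool := [forall x, f x ==> g x].

Definition monotoneBF (k : nat) (f : BF k) : bool :=
  [forall x, forall y, vle x y ==> (f x ==> f y)].

Definition bf0 (k : nat) : BF k := [ffun => false].

Definition inFminus (k : nat) (f : BF k) : bool := monotoneBF f && (f != bf0 k).

(* g[p_1 := e] : substitute e for p_1 (index ord0); the remaining variables
   p_2..p_(k+1) become the variables of the resulting function of k variables. *)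
Definition subst1 (k : nat) (g : BF k.+1) (e : bool) : BF k :=
  [ffun y : assign k =>
     g [ffun i : 'I_k.+1 => if unlift ord0 i is Some j then y j else e]].

(* The relation 2^6 -> 167 => 19 is witnessed by an explicit map
   phi : 2^6 -> F_4^-, found by computer search and given by a table of 64
   truth tables.  The proof is a certified finite verification:

   - assignments a : 2^k are coded by the numbers code a < 2^k (p_1 is the
     least significant bit), so that a truth table of a k-variable function
     is a list of 2^k Booleans indexed by these codes;
   - every property of the theorem (monotonicity, being nonzero, pointwise
     order, substitution p_1 := e, distinctness) of functions given by truth
     tables is reflected into a Boolean test on the lists, quantifying over
     the codes 0 .. 2^k - 1 instead of over assignments;
   - these tests are evaluated on the table of phi by the virtual machine;
     covering of F_3^- is tested against the list of all 256 truth tables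
     of 3-variable functions.

   The second claim (an injective isotone map into F_4) follows from the
   first, since F_4^- is contained in F_4. *)

From mathcomp Require Import all_boot zify.
From Stdlib Require Import BinNatDef.
Set Implicit Arguments. Unset Strict Implicit. Unset Printing Implicit Defensive.

Definition atail (k : nat) (a : assign k.+1) : assign k :=
  [ffun j => a (lift ord0 j)].
Definition acons (k : nat) (b : bool) (t : assign k) : assign k.+1 :=
  [ffun i : 'I_k.+1 => if unlift ord0 i is Some j then t j else b].

Fixpoint code (k : nat) : assign k -> nat :=
  match k return assign k -> nat with
  | 0 => fun _ => 0
  | k'.+1 => fun a => a ord0 + 2 * code (atail a)
  end.

Fixpoint decode (k n : nat) : assign k :=
  match k with
  | 0 => [ffun => false]
  | k'.+1 => acons (odd n) (decode k' n./2)
  end.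

Lemma acons0 k b (t : assign k) : acons b t ord0 = b.
Proof. by rewrite ffunE unlift_none. Qed.

Lemma acons_lift k b (t : assign k) j : acons b t (lift ord0 j) = t j.
Proof. by rewrite ffunE liftK. Qed.

Lemma atail_acons k b (t : assign k) : atail (acons b t) = t.
Proof. by apply/ffunP => j; rewrite ffunE acons_lift. Qed.

Lemma acons_eta k (a : assign k.+1) : acons (a ord0) (atail a) = a.
Proof. by apply/ffunP => i; rewrite ffunE; case: unliftP => [j ->|->]; rewrite ?ffunE. Qed.

Lemma code_acons k b (t : assign k) : code (acons b t) = b + 2 * code t.
Proof. by rewrite /= acons0 atail_acons. Qed.

Lemma code_lt k (a : assign k) : code a < 2 ^ k.
Proof. by elim: k a => [|k IH] a //=; have := IH (atail a); rewrite expnS; lia. Qed.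

Lemma codeK k : cancel (@code k) (decode k).
Proof.
elim: k => [|k IH] a /=; first by apply/ffunP => -[].
by rewrite mul2n half_bit_double oddD odd_double addbF oddb IH acons_eta.
Qed.

Lemma decodeK k n : n < 2 ^ k -> code (decode k n) = n.
Proof.
elim: k n => [|k IH] n; first by rewrite expn0 ltnS leqn0 => /eqP ->.
rewrite expnS -[n in n < _]odd_double_half => lt_n.
by rewrite [code _]code_acons IH ?mul2n ?odd_double_half //; lia.
Qed.

Lemma allP_codes k (P : pred nat) :
  reflect (forall a : assign k, P (code a)) (all P (iota 0 (2 ^ k))).
Proof.
apply: (iffP allP) => [allP a | allP n]; first by apply: allP; rewrite mem_iota code_lt.
by rewrite mem_iota => /= lt_n; rewrite -(decodeK lt_n).
Qed.

Lemma hasP_codes k (P : pred nat) :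
  reflect (exists a : assign k, P (code a)) (has P (iota 0 (2 ^ k))).
Proof.
apply: (iffP hasP) => [[n] | [a Pa]]; last by exists (code a); rewrite ?mem_iota ?code_lt.
by rewrite mem_iota => /= lt_n; exists (decode k n); rewrite decodeK.
Qed.

Fixpoint code_le (k m n : nat) : bool :=
  if k is k'.+1 then (odd m ==> odd n) && code_le k' m./2 n./2 else true.

Lemma vle_acons k b b' (t t' : assign k) :
  vle (acons b t) (acons b' t') = (b ==> b') && vle t t'.
Proof.
apply/forallP/andP => [le_bt | [le_b /forallP le_t] i].
  split; first by have := le_bt ord0; rewrite !acons0.
  by apply/forallP => j; have := le_bt (lift ord0 j); rewrite !acons_lift.
by case: (unliftP ord0 i) => [j ->|->]; rewrite ?acons_lift ?acons0.
Qed.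

Lemma vle_decode k m n : vle (decode k m) (decode k n) = code_le k m n.
Proof.
elim: k m n => [|k IH] m n /=; last by rewrite vle_acons IH.
by apply/forallP => -[].
Qed.

Lemma vle_code k (a b : assign k) : vle a b = code_le k (code a) (code b).
Proof. by rewrite -vle_decode !codeK. Qed.

Definition ofTable (k : nat) (t : seq bool) : BF k :=
  [ffun a => nth false t (code a)].

Definition tableOf (k : nat) (f : BF k) : seq bool :=
  [seq f (decode k m) | m <- iota 0 (2 ^ k)].

Lemma tableOfK k (f : BF k) : ofTable k (tableOf f) = f.
Proof.
by apply/ffunP => a; rewrite ffunE (nth_map 0) ?size_iota ?code_lt // nth_iota ?code_lt ?codeK.
Qed.

Lemma ofTable_inj k (t s : seq bool) :
  size t = 2 ^ k -> size s = 2 ^ k -> ofTable k t = ofTable k s -> t = s.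
Proof.
move=> size_t size_s eq_ts; apply: (eq_from_nth (x0 := false)) => [|m]; first by rewrite size_t.
rewrite size_t => lt_m; have /ffunP/(_ (decode k m)) := eq_ts.
by rewrite !ffunE decodeK.
Qed.

Definition monoTable (k : nat) (t : seq bool) : bool :=
  all (fun m => all (fun n => code_le k m n ==> nth false t m ==> nth false t n)
    (iota 0 (2 ^ k))) (iota 0 (2 ^ k)).

Lemma monotone_ofTable k t : monotoneBF (ofTable k t) = monoTable k t.
Proof.
apply/forallP/allP_codes => [mono a | mono a].
  by apply/allP_codes => b; have /forallP/(_ b) := mono a; rewrite vle_code !ffunE.
by apply/forallP => b; have /allP_codes/(_ b) := mono a; rewrite vle_code !ffunE.
Qed.

Lemma nonzero_ofTable k t :
  (ofTable k t != bf0 k) = has (nth false t) (iota 0 (2 ^ k)).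
Proof.
apply/idP/idP => [|/hasP_codes[a t_a]].
  apply: contra_neqT => /hasP_codes no_true; apply/ffunP => a.
  by rewrite !ffunE; apply/negbTE/negP => t_a; apply: no_true; exists a.
by apply/eqP => /ffunP/(_ a); rewrite !ffunE t_a.
Qed.

Lemma fle_ofTable k t s :
  fle (ofTable k t) (ofTable k s) =
  all (fun m => nth false t m ==> nth false s m) (iota 0 (2 ^ k)).
Proof.
by apply/forallP/allP_codes => le_ts a; have := le_ts a; rewrite !ffunE.
Qed.

Lemma subst1_ofTable k t (e : bool) s :
  all (fun m => nth false t (e + 2 * m) == nth false s m) (iota 0 (2 ^ k)) ->
  subst1 (ofTable k.+1 t) e = ofTable k s.
Proof.
move=> /allP_codes eq_ts; apply/ffunP => y.
rewrite !ffunE -/(acons e y) code_acons; exact/eqP.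
Qed.

Fixpoint boolLists (n : nat) : seq (seq bool) :=
  if n is n'.+1 then [seq b :: t | b <- [:: false; true], t <- boolLists n']
  else [:: [::]].

Lemma mem_boolLists (t : seq bool) : t \in boolLists (size t).
Proof.
by elim: t => [|[] t IH] //=; rewrite mem_cat ?cats0 (map_f _ IH) ?orbT.
Qed.

(* A 4-variable truth table written as a 16-bit word: bit number code a is
   the value at a (so 0x8000 is p_1 p_2 p_3 p_4 and 0xFFFE is their join). *)
Definition truthTable (w : N) : seq bool :=
  [seq N.testbit w (N.of_nat m) | m <- iota 0 (2 ^ 4)].

Definition phiWords : seq N := [::
  0x8000; 0x8080; 0xA000; 0xA080; 0x8800; 0x8880; 0xA800; 0xA880;
  0xC000; 0xC880; 0xE000; 0xE888; 0xE800; 0xF880; 0xF800; 0xF888;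
  0xC080; 0xE080; 0xE0A0; 0xE8A0; 0xE880; 0xEC80; 0xE8E0; 0xECE0;
  0xC0C0; 0xE8C0; 0xE0E0; 0xE8E8; 0xEAC0; 0xFEC0; 0xFAE0; 0xFEEC;
  0xC800; 0xCC80; 0xEA00; 0xEE80; 0xCC00; 0xCCC0; 0xEE00; 0xEEC0;
  0xEC00; 0xECC0; 0xFE00; 0xFEC8; 0xFC00; 0xFCC0; 0xFF00; 0xFFC8;
  0xC888; 0xEC88; 0xEAA8; 0xEEA8; 0xECA8; 0xECE8; 0xEEE8; 0xEEEC;
  0xECC8; 0xEEC8; 0xFEE8; 0xFEF8; 0xFFE8; 0xFFEA; 0xFFF8; 0xFFFE]%num.

Definition phiRow (c : nat) : seq bool := truthTable (nth 0%num phiWords c).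

Definition phi (x : assign 6) : BF 4 := ofTable 4 (phiRow (code x)).

Lemma phiRows_uniq : uniq [seq phiRow c | c <- iota 0 (2 ^ 6)].
Proof. by vm_compute. Qed.

Lemma phiRows_mono_nonzero :
  all (fun c => monoTable 4 (phiRow c) && has (nth false (phiRow c)) (iota 0 (2 ^ 4)))
    (iota 0 (2 ^ 6)).
Proof. by vm_compute. Qed.

Lemma phiRows_isotone :
  all (fun c => all (fun d => code_le 6 c d ==>
    all (fun m => nth false (phiRow c) m ==> nth false (phiRow d) m) (iota 0 (2 ^ 4)))
  (iota 0 (2 ^ 6))) (iota 0 (2 ^ 6)).
Proof. by vm_compute. Qed.

Lemma phiRows_cover :
  all (fun t => monoTable 3 t && has (nth false t) (iota 0 (2 ^ 3)) ==>
    has (fun c => has (fun e : bool =>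
      all (fun m => nth false (phiRow c) (e + 2 * m) == nth false t m) (iota 0 (2 ^ 3)))
    [:: false; true]) (iota 0 (2 ^ 6)))
  (boolLists (2 ^ 3)).
Proof. by vm_compute. Qed.

Lemma phi_injective : injective phi.
Proof.
move=> x y /ofTable_inj; rewrite !size_map !size_iota => /(_ erefl erefl) eq_rows.
apply: (can_inj (@codeK 6)); apply/eqP.
rewrite -(nth_uniq [::] _ _ phiRows_uniq) ?size_map ?size_iota ?code_lt //.
by rewrite !(nth_map 0) ?size_iota ?code_lt // !nth_iota ?code_lt // eq_rows.
Qed.

Lemma phi_in_Fminus x : inFminus (phi x).
Proof.
have /allP_codes/(_ x)/andP[mono nonzero] := phiRows_mono_nonzero.
by rewrite /inFminus monotone_ofTable nonzero_ofTable mono.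
Qed.

Lemma phi_isotone x y : vle x y -> fle (phi x) (phi y).
Proof.
rewrite vle_code fle_ofTable => le_xy.
by have /allP_codes/(_ x)/allP_codes/(_ y) := phiRows_isotone; rewrite le_xy.
Qed.

Lemma phi_covers_F3minus (h : BF 3) :
  inFminus h -> exists (x : assign 6) (e : bool), subst1 (phi x) e = h.
Proof.
have size_h : size (tableOf h) = 2 ^ 3 by rewrite size_map size_iota.
have := mem_boolLists (tableOf h); rewrite size_h => /(allP phiRows_cover).
move=> covered /andP[mono_h nonzero_h].
have /(implyP covered)/hasP_codes[x /hasP[e _ restr_x]] :
    monoTable 3 (tableOf h) && has (nth false (tableOf h)) (iota 0 (2 ^ 3)).
  by rewrite -monotone_ofTable -nonzero_ofTable tableOfK mono_h nonzero_h.
by exists x, e; rewrite -(tableOfK h); apply: subst1_ofTable.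
Qed.

Theorem mainTheorem10 :
  (exists phi : assign 6 -> BF 4,
      injective phi
   /\ (forall x, inFminus (phi x))
   /\ (forall x y, vle x y -> fle (phi x) (phi y))
   /\ (forall h : BF 3, inFminus h ->
         exists (x : assign 6) (e : bool), subst1 (phi x) e = h))
  /\
  (exists psi : assign 6 -> BF 4,
      injective psi
   /\ (forall x, monotoneBF (psi x))
   /\ (forall x y, vle x y -> fle (psi x) (psi y))).
Proof.
split; exists phi; split; do ?split.
- exact: phi_injective.
- exact: phi_in_Fminus.
- exact: phi_isotone.
- exact: phi_covers_F3minus.
- exact: phi_injective.
- by move=> x; case/andP: (phi_in_Fminus x).
- exact: phi_isotone.
Qed.
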